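(* Let $f:2^V\to\mathbb{R}$ be a monotone non-decreasing submodular function with $f(\emptyset)=0$. Then for every $x\in[0,1]^n$ and every permutation $\sigma$ of $V$, $$d_{\hat f}(x\|\sigma)\le \epsilon\, n\Big(\max_{j\in V} f(\{j\})-\min_{j\in V} f(j\mid V\setminus\{j\})\Big)\le \epsilon\, n\max_{j\in V} f(\{j\}),$$ where $\epsilon=\max_{i,j\in V}|x_i-x_j|$ and $f(j\mid A)=f(A\cup\{j\})-f(A)$.
   Context: Let $V=\{1,\dots,n\}$. A permutation $\sigma$ is a bijection $V\to V$, where $\sigma(i)$ is the element placed at rank $i$. Write $S^\sigma_0=\emptyset$, $S^\sigma_j=\{\sigma(1),\dots,\sigma(j)\}$. For $f:2^V\to\mathbb{R}$ define $h^f_\sigma\in\mathbb{R}^n$ by $h^f_\sigma(\sigma(j))=f(S^\sigma_j)-f(S^\sigma_{j-1})$. For $x\in\mathbb{R}^n$, $\sigma_x$ orders $x$ if $x(\sigma_x(1))\ge\cdots\ge x(\sigma_x(n))$; the Lovász extension is $\hat f(x)=\langle x,h^f_{\sigma_x}\rangle$ (independent of the choice of $\sigma_x$). The LB divergence is $d_{\hat f}(x\|\sigma)=\hat f(x)-\langle x,h^f_\sigma\rangle$ for $x\in[0,1]^n$. *)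

(* V = {1..n} is modelled as 'I_n (0-based). *)
From HB Require Import structures.
From mathcomp Require Import all_boot all_order all_algebra all_fingroup.
Set Implicit Arguments. Unset Strict Implicit. Unset Printing Implicit Defensive.
Import Order.TTheory GRing.Theory Num.Theory.
Local Open Scope ring_scope.

Section Defs.
Variables (R : realFieldType) (n : nat).
Implicit Types (f : {set 'I_n} -> R) (s : {perm 'I_n}) (x : 'I_n -> R).

Definition prefix s (j : nat) : {set 'I_n} := [set s i | i : 'I_n & (i < j)%N].

(* h^f_s (s(j)) = f(S_{j+1}) - f(S_j) (0-based ranks) *)
Definition hvec f s (v : 'I_n) : R :=
  f (prefix s ((s^-1)%g v).+1) - f (prefix s ((s^-1)%g v)).

Definition orders s x : bool :=
  [forall i : 'I_n, forall j : 'I_n, (i <= j)%N ==> (x (s j) <= x (s i))].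

Definition inner x (y : 'I_n -> R) : R := \sum_(i : 'I_n) x i * y i.

(* a permutation ordering x (one always exists); identity as dummy default *)
Definition order_perm x : {perm 'I_n} :=
  odflt 1%g [pick s : {perm 'I_n} | orders s x].

Definition lovasz f x : R := inner x (hvec f (order_perm x)).

Definition LBdiv f x s : R := lovasz f x - inner x (hvec f s).

Definition monotone_set f : Prop := forall A B : {set 'I_n}, A \subset B -> f A <= f B.
Definition submodular f : Prop :=
  forall A B : {set 'I_n}, f (A :|: B) + f (A :&: B) <= f A + f B.

Definition marg f (j : 'I_n) (A : {set 'I_n}) : R := f (j |: A) - f A.

Definition in01 x : Prop := forall i, 0 <= x i <= 1.

Definition spread x : R :=
  \big[Num.max/0]_(i : 'I_n) \big[Num.max/0]_(j : 'I_n) `|x i - x j|.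
End Defs.

Definition max_single (R : realFieldType) (n : nat) (f : {set 'I_n.+1} -> R) : R :=
  \big[Num.max/f [set ord0]]_(j : 'I_n.+1) f [set j].
Definition min_last_marg (R : realFieldType) (n : nat) (f : {set 'I_n.+1} -> R) : R :=
  \big[Num.min/marg f ord0 (~: [set ord0])]_(j : 'I_n.+1) marg f j (~: [set j]).

From Pilot Require Import Defs.
From HB Require Import structures.
From mathcomp Require Import all_boot all_order all_algebra all_fingroup.
From mathcomp Require Import lra.
Set Implicit Arguments. Unset Strict Implicit. Unset Printing Implicit Defensive.
Import Order.TTheory GRing.Theory Num.Theory.
Local Open Scope ring_scope.

(* For any permutation s the increments h^f_s telescope along the
   chain of prefixes S^s_0 = set0 ⊆ ... ⊆ S^s_N = V, so every vector h^f_s has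
   the same total sum f(V) - f(set0).  Hence the LB divergence, a difference
   <x, h_{s_x}> - <x, h_s> of two such inner products, is unchanged when x is
   shifted by a constant: d(x||s) = Σ_v (x_v - x_0)(h_{s_x}(v) - h_s(v)).
   By submodularity (diminishing returns) each increment h_s(v) lies between
   f(v | V \ {v}) and f({v}), so |h_{s_x}(v) - h_s(v)| <= max f({j}) - min
   f(j | V \ {j}), while |x_v - x_0| <= spread x. *)

Section Prefixes.
Variables (N : nat) (s : {perm 'I_N}).

Lemma mem_prefix (j : nat) (v : 'I_N) : (v \in Defs.prefix s j) = ((s^-1)%g v < j)%N.
Proof.
apply/imsetP/idP => [[i Hi ->]|H]; first by rewrite permK; move: Hi; rewrite inE.
by exists ((s^-1)%g v); rewrite ?inE ?permKV.
Qed.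

Lemma prefix0 : Defs.prefix s 0 = set0.
Proof. by apply/setP => v; rewrite mem_prefix inE. Qed.

Lemma prefix_full : Defs.prefix s N = setT.
Proof. by apply/setP => v; rewrite mem_prefix ltn_ord inE. Qed.

Lemma notin_prefix (v : 'I_N) : v \notin Defs.prefix s ((s^-1)%g v).
Proof. by rewrite mem_prefix ltnn. Qed.

Lemma prefixS (v : 'I_N) :
  Defs.prefix s ((s^-1)%g v).+1 = v |: Defs.prefix s ((s^-1)%g v).
Proof.
apply/setP => y; rewrite in_setU1 !mem_prefix ltnS leq_eqVlt; congr (_ || _).
by rewrite -[(_ == _)%N]/((s^-1)%g y == (s^-1)%g v) (inj_eq (@perm_inj _ _)).
Qed.

End Prefixes.

Section Increments.
Variables (R : realFieldType) (N : nat) (f : {set 'I_N} -> R).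

Lemma hvecE (s : {perm 'I_N}) (v : 'I_N) :
  hvec f s v = marg f v (Defs.prefix s ((s^-1)%g v)).
Proof. by rewrite /hvec prefixS. Qed.

Lemma sum_hvec (s : {perm 'I_N}) : \sum_v hvec f s v = f setT - f set0.
Proof.
rewrite (reindex_inj (@perm_inj _ s)) /=.
under eq_bigr => i _ do rewrite /hvec permK.
rewrite -(big_mkord xpredT (fun i => f (Defs.prefix s i.+1) - f (Defs.prefix s i))).
by rewrite telescope_sumr // prefix_full prefix0.
Qed.

Lemma marg_ge0 (v : 'I_N) (A : {set 'I_N}) : monotone_set f -> 0 <= marg f v A.
Proof. by move=> hmono; rewrite subr_ge0 hmono // subsetUr. Qed.

Hypothesis hsub : submodular f.

Lemma marg_antimono (v : 'I_N) (A B : {set 'I_N}) :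
  A \subset B -> v \notin B -> marg f v B <= marg f v A.
Proof.
move=> AB vB; have := hsub (v |: A) B.
have -> : (v |: A) :|: B = v |: B by rewrite -setUA (setUidPr AB).
have -> : (v |: A) :&: B = A.
  apply/setP => y; rewrite !inE; case: (eqVneq y v) => [->|_] /=.
    by rewrite (negbTE vB); apply/esym/negbTE; apply: contra vB => /(subsetP AB).
  by apply/andP/idP => [[]|H] //; split => //; apply: (subsetP AB).
by rewrite /marg => H; lra.
Qed.

Lemma hvec_le_single (s : {perm 'I_N}) (v : 'I_N) :
  f set0 = 0 -> hvec f s v <= f [set v].
Proof.
move=> h0; rewrite hvecE.
have := marg_antimono (sub0set _) (notin_prefix s v).
by rewrite /marg setU0 h0 subr0.
Qed.

Lemma last_marg_le_hvec (s : {perm 'I_N}) (v : 'I_N) :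
  marg f v (~: [set v]) <= hvec f s v.
Proof.
rewrite hvecE; apply: marg_antimono; last by rewrite !inE eqxx.
apply/subsetP => y Hy; rewrite !inE; apply: contraNneq (notin_prefix s v).
by move=> Eyv; rewrite Eyv in Hy.
Qed.

End Increments.

Section Divergence.
Variables (R : realFieldType) (N : nat).

Lemma inner_diff_shift (x y z : 'I_N -> R) (c : R) :
  \sum_v y v = \sum_v z v ->
  inner x y - inner x z = \sum_v (x v - c) * (y v - z v).
Proof.
move=> Eyz; rewrite /inner -sumrB.
under [RHS]eq_bigr => v _ do rewrite mulrBl.
rewrite [RHS]sumrB -mulr_sumr [X in c * X]sumrB Eyz subrr mulr0 subr0.
by apply: eq_bigr => v _; rewrite mulrBr.
Qed.

Lemma LBdiv_shift (f : {set 'I_N} -> R) (x : 'I_N -> R) (s : {perm 'I_N}) c :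
  LBdiv f x s = \sum_v (x v - c) * (hvec f (order_perm x) v - hvec f s v).
Proof. by rewrite /LBdiv /lovasz; apply: inner_diff_shift; rewrite !sum_hvec. Qed.

Lemma dist_le_spread (x : 'I_N -> R) (i j : 'I_N) : `|x i - x j| <= spread x.
Proof.
apply: le_trans (le_bigmax _ _ i).
exact: (le_bigmax _ (fun j => `|x i - x j|) j).
Qed.

End Divergence.

Section Extremal.
Variables (R : realFieldType) (n : nat) (f : {set 'I_n.+1} -> R).

Lemma single_le_max (v : 'I_n.+1) : f [set v] <= max_single f.
Proof. exact: (le_bigmax _ (fun j => f [set j])). Qed.

Lemma min_le_last_marg (v : 'I_n.+1) : min_last_marg f <= marg f v (~: [set v]).
Proof. exact: (bigmin_le _ _ (fun j => marg f j (~: [set j]))). Qed.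

Lemma min_last_marg_ge0 : monotone_set f -> 0 <= min_last_marg f.
Proof. by move=> hmono; apply: le_bigmin => [|j _]; apply: marg_ge0. Qed.

Lemma hvec_diff_bound (hsub : submodular f) (h0 : f set0 = 0)
    (s1 s2 : {perm 'I_n.+1}) (v : 'I_n.+1) :
  `|hvec f s1 v - hvec f s2 v| <= max_single f - min_last_marg f.
Proof.
have := hvec_le_single hsub s1 v h0; have := hvec_le_single hsub s2 v h0.
have := last_marg_le_hvec hsub s1 v; have := last_marg_le_hvec hsub s2 v.
have := single_le_max v; have := min_le_last_marg v.
by move=> *; rewrite ler_norml; apply/andP; split; lra.
Qed.

End Extremal.

Theorem mainTheorem7 (R : realFieldType) (n : nat) (f : {set 'I_n.+1} -> R)
  (hmono : monotone_set f) (hsub : submodular f) (h0 : f set0 = 0)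
  (x : 'I_n.+1 -> R) (hx : in01 x) (s : {perm 'I_n.+1}) :
  LBdiv f x s <= spread x * n.+1%:R * (max_single f - min_last_marg f) /\
  spread x * n.+1%:R * (max_single f - min_last_marg f)
    <= spread x * n.+1%:R * max_single f.
Proof.
have spread_ge0 : 0 <= spread x := le_trans (normr_ge0 _) (dist_le_spread x ord0 ord0).
have m_ge0 := min_last_marg_ge0 hmono.
split; last by rewrite ler_wpM2l ?mulr_ge0 ?ler0n // lerBlDr lerDl.
rewrite (LBdiv_shift f x s (x ord0)).
apply: le_trans (_ : \sum_(v : 'I_n.+1) spread x * (max_single f - min_last_marg f) <= _).
  apply: ler_sum => v _; apply: le_trans (ler_norm _) _; rewrite normrM.
  by apply: ler_pM; rewrite ?normr_ge0 ?dist_le_spread ?hvec_diff_bound.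
by rewrite sumr_const card_ord [leRHS]mulrAC mulr_natr.
Qed.
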